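(* Let $\Gamma=\{0=\rho_1<\rho_2<\cdots\}$ be an Arf numerical semigroup and $d_i=\rho_{i+1}-\rho_i$ for $i\ge1$. If $i\ge2$ and $d_i<d_{i-1}$, then \[ \mathrm{Ap}(\Gamma,-d_i)=\{\rho_1,\dots,\rho_{i-1}\}. \]
   Context: A numerical semigroup is a subset of $\mathbb N$ containing $0$, closed under addition, with finite complement; its elements listed increasingly are $\rho_1<\rho_2<\cdots$. $\Gamma$ is Arf if $\rho_i+\rho_j-\rho_k\in\Gamma$ for all $i\ge j\ge k$. For $x\in\mathbb Z$, $\mathrm{Ap}(\Gamma,x)=\{s\in\Gamma: s-x\notin\Gamma\}$. *)

From mathcomp Require Import all_boot all_algebra.
Set Implicit Arguments. Unset Strict Implicit. Unset Printing Implicit Defensive.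
Import GRing.Theory Num.Theory.

Definition numerical_semigroup (G : pred nat) : Prop :=
  [/\ G 0%N,
      (forall a b, G a -> G b -> G (a + b)%N)
    & exists N : nat, forall n, (N <= n)%N -> G n].

(* rho enumerates G increasingly, with paper indexing rho 1 < rho 2 < ... *)
Definition enumerates (G : pred nat) (rho : nat -> nat) : Prop :=
  (forall i j, (1 <= i)%N -> (i < j)%N -> (rho i < rho j)%N) /\
  (forall x, G x <-> exists2 i, (1 <= i)%N & rho i = x).

(* Arf: rho_i + rho_j - rho_k in G for all i >= j >= k >= 1
   (the subtraction is exact since rho_k <= rho_i). *)
Definition Arf (G : pred nat) (rho : nat -> nat) : Prop :=
  forall i j k, (1 <= k)%N -> (k <= j)%N -> (j <= i)%N ->
    G (rho i + rho j - rho k)%N.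

Definition memZ (G : pred nat) (z : int) : Prop :=
  exists2 n : nat, z = Posz n & G n.

Definition Apery (G : pred nat) (x : int) (s : nat) : Prop :=
  G s /\ ~ memZ G (Posz s - x)%R.

(** Write [d = rho (i+1) - rho i].  If [j >= i], the Arf property puts
    [rho j + d = rho j + rho (i+1) - rho i] in the semigroup, so [rho j] is not in the
    Apéry set.  If [j < i] and [rho j + d = rho k], then [j < k < i] and the Arf
    property gives [rho (i-1) + rho k - rho j = rho (i-1) + d] in the semigroup;
    as [0 < d < rho i - rho (i-1)], this element lies strictly between two
    consecutive elements, which is impossible. *)
From mathcomp Require Import all_boot all_algebra.
From mathcomp Require Import zify.
Import GRing.Theory Num.Theory.

Set Implicit Arguments.
Unset Strict Implicit.

Lemma Apery_oppP (G : pred nat) (d s : nat) :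
  Apery G (- Posz d)%R s <-> G s /\ ~ G (s + d)%N.
Proof.
rewrite /Apery /memZ opprK; split=> -[Gs nGsd]; split=> //.
  by move=> Gsd; apply: nGsd; exists (s + d)%N.
by case=> n; rewrite -PoszD => -[<-].
Qed.

Section Enumeration.

Variables (G : pred nat) (rho : nat -> nat).
Hypothesis rho_enum : enumerates G rho.

Lemma ltn_rho a b : (1 <= a)%N -> (1 <= b)%N -> (rho a < rho b)%N = (a < b)%N.
Proof.
case: rho_enum => rho_mono _ a1 b1.
case: (ltngtP a b) => [ab|ba|->].
- exact: rho_mono.
- by apply/negbTE; rewrite -leqNgt; apply: ltnW; apply: rho_mono.
- by rewrite ltnn.
Qed.

Lemma leq_rho a b : (1 <= a)%N -> (1 <= b)%N -> (rho a <= rho b)%N = (a <= b)%N.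
Proof. by move=> a1 b1; rewrite leqNgt ltn_rho // -leqNgt. Qed.

Lemma mem_rho i : (1 <= i)%N -> G (rho i).
Proof. by move=> i1; apply/(rho_enum.2 _); exists i. Qed.

Lemma notin_rho_gap i x : (1 <= i)%N -> (rho i < x < rho i.+1)%N -> ~~ G x.
Proof.
move=> i1 /andP[lo hi]; apply/negP=> /(rho_enum.2 _) [k k1 rhok].
by rewrite -rhok !ltn_rho // in lo hi; lia.
Qed.

Hypothesis rho_Arf : Arf G rho.

Lemma Arf_add_sub i j k :
  (1 <= k)%N -> (k <= i)%N -> (k <= j)%N -> G (rho i + rho j - rho k)%N.
Proof.
move=> k1 ki kj; case: (leqP j i) => [ji|ij]; first exact: rho_Arf.
by rewrite addnC; apply: rho_Arf => //; apply: ltnW.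
Qed.

Lemma Arf_add_gap i j : (1 <= i <= j)%N -> G (rho j + (rho i.+1 - rho i))%N.
Proof.
move=> /andP[i1 ij].
rewrite addnBA ?leq_rho //; apply: Arf_add_sub => //; lia.
Qed.

Lemma Arf_notin_add_small i j d :
  (1 <= j <= i)%N -> (0 < d < rho i.+1 - rho i)%N -> ~~ G (rho j + d)%N.
Proof.
move=> /andP[j1 ji] /andP[d0 dsmall]; apply/negP=> /(rho_enum.2 _) [k k1 rhok].
have i1 := leq_trans j1 ji.
have rhoji : (rho j <= rho i)%N by rewrite leq_rho.
have jk : (j <= k)%N by rewrite -leq_rho // rhok leq_addr.
have ki : (k <= i)%N by rewrite -ltnS -ltn_rho //; lia.
have : ~~ G (rho i + rho k - rho j) by apply: (notin_rho_gap (i := i)) => //; lia.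
by rewrite Arf_add_sub.
Qed.

End Enumeration.

Theorem lemma3p3 (G : pred nat) (rho : nat -> nat)
  (HG : numerical_semigroup G) (Hrho : enumerates G rho) (HArf : Arf G rho)
  (i : nat) (Hi : (2 <= i)%N)
  (Hd : (rho i.+1 - rho i < rho i - rho i.-1)%N) :
  forall s : nat,
    Apery G (- Posz (rho i.+1 - rho i)%N)%R s <->
    exists j : nat, [/\ (1 <= j)%N, (j <= i.-1)%N & s = rho j].
Proof.
have i1 : (1 <= i)%N by apply: ltnW.
move=> s; rewrite Apery_oppP; split.
  case=> /(Hrho.2 s) [j j1 <-] nGs.
  exists j; split=> //; rewrite leqNgt; apply/negP=> ij.
  by apply: nGs; apply: (Arf_add_gap Hrho HArf (i := i)); lia.
case=> j [j1 ji ->]; split; first exact: (mem_rho Hrho).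
have d0 : (0 < rho i.+1 - rho i)%N by rewrite subn_gt0 (ltn_rho Hrho).
apply/negP; apply: (Arf_notin_add_small Hrho HArf (i := i.-1)); first lia.
by rewrite prednK // d0.
Qed.
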